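(* Let $n$ be a prime, let $\alpha$ be a primitive element of $\mathbb{F}_{2^n}$, identify $\mathbb{F}_2^n$ with $\mathbb{F}_{2^n}$ as $\mathbb{F}_2$-vector spaces, and let $k\ge 2$. Suppose there exists a Steiner structure $\mathbb{S}_2[2,k,n]$ formed by $\frac{2^n-2}{(2^k-1)(2^k-2)n}$ pairwise disjoint coset complete $k$-dimensional subspaces $X_1,\dots,X_N$ (meaning that the set of all subspaces $\alpha^j X_i^{2^\ell}=\{\alpha^j x^{2^\ell}: x\in X_i\}$, $1\le i\le N$, $0\le \ell\le n-1$, $0\le j\le 2^n-2$, is a Steiner structure $\mathbb{S}_2[2,k,n]$). Then there exists a $(2^n-1,2^k-1,1)$ difference family over the group $\mathbb{Z}_{2^n-1}$.
   Context: For $s\in\mathbb{Z}_{2^n-1}$, the cyclotomic coset of $s$ is $C_s=\{s\cdot 2^i \bmod (2^n-1): 0\le i\le n-1\}$ and $\rho(s)=\min C_s$. For a $k$-dimensional subspace $X=\{0,\alpha^{i_1},\dots,\alpha^{i_{2^k-1}}\}$ (exponents in $\mathbb{Z}_{2^n-1}$), $\rho(\Delta(X))=\{\rho(i_r-i_s): r\ne s\}$; $X$ is coset complete if $|\rho(\Delta(X))|=(2^k-1)(2^k-2)$, and coset complete $X,Y$ are disjoint if $\rho(\Delta(X))\cap\rho(\Delta(Y))=\varnothing$. A Steiner structure $\mathbb{S}_2[2,k,n]$ is a set of $k$-dimensional subspaces of $\mathbb{F}_2^n$ such that every $2$-dimensional subspace is contained in exactly one of them. An $(m,w,\lambda)$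 difference family over an additive group $G$ with $|G|=m$ is a set of $w$-subsets of $G$ such that each element of $G\setminus\{0\}$ occurs exactly $\lambda$ times as a difference $a-b$ of two distinct elements $a,b$ lying in a common subset of the family. *)

From mathcomp Require Import all_boot all_order all_algebra all_field.
Set Implicit Arguments. Unset Strict Implicit. Unset Printing Implicit Defensive.
Import GRing.Theory.
Local Open Scope ring_scope.

Definition rho (n s : nat) : nat :=
  \big[minn/(s %% (2 ^ n - 1))%N]_(i < n) ((s * 2 ^ i) %% (2 ^ n - 1))%N.

Definition dlog (F : finFieldType) (m : nat) (alpha z : F) : nat :=
  find (fun i => alpha ^+ i == z) (iota 0 m).

(* F_2-subspace of F (char 2): contains 0 and closed under addition *)
Definition is_subspace (F : finFieldType) (X : {set F}) : bool :=
  (0 \in X) && [forall x in X, forall y in X, x + y \in X].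

Definition is_ksubspace (F : finFieldType) (k : nat) (X : {set F}) : bool :=
  is_subspace X && (#|X| == 2 ^ k)%N.

Definition steiner_structure (F : finFieldType) (k : nat) (S : {set {set F}}) :=
  (forall X, X \in S -> is_ksubspace k X) /\
  (forall Y : {set F}, is_ksubspace 2 Y -> #|[set X in S | Y \subset X]| = 1%N).

(* rho(Delta(X)) : the set {rho(i_r - i_s) : r <> s}, where x = alpha^(i_r) *)
Definition rhoDelta (F : finFieldType) (n : nat) (alpha : F) (X : {set F}) : seq nat :=
  undup [seq rho n (dlog (2 ^ n - 1) alpha (p.1 / p.2))
        | p <- [seq (x, y) | x <- enum (X :\ 0), y <- enum (X :\ 0)] & p.1 != p.2].

Definition coset_complete (F : finFieldType) (n k : nat) (alpha : F) (X : {set F}) :=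
  size (rhoDelta n alpha X) = ((2 ^ k - 1) * (2 ^ k - 2))%N.

Definition cc_disjoint (F : finFieldType) (n : nat) (alpha : F) (X Y : {set F}) :=
  all (fun a => a \notin rhoDelta n alpha Y) (rhoDelta n alpha X).

Definition difference_family (G : finZmodType) (w lambda : nat) (D : seq {set G}) :=
  uniq D /\ all (fun B : {set G} => #|B| == w)%N D /\
  forall g : G, g != 0 ->
    (\sum_(B <- D) #|[set p : G * G | [&& p.1 \in B, p.2 \in B, p.1 != p.2 & (p.1 - p.2 == g)%R]]|)%N
    = lambda.

From mathcomp Require Import all_boot all_order all_algebra all_field.
From mathcomp Require Import zify.
Import Order.TTheory GRing.Theory.
Local Open Scope ring_scope.

(* Identify F^* with 'Z_(2^n - 1) through the discrete logarithm to base alpha.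
   The difference family consists of the log-images of the punctured subspaces
   X_i^(2^l), 0 <= l < n.  A nonzero residue g is a difference of such a block
   exactly when alpha^g is a ratio of two elements of X_i^(2^l), i.e. when the
   plane spanned by 1 and alpha^g lies in some alpha^j X_i^(2^l); the Steiner
   property provides one.  Conversely a ratio x/y with x, y in X_i determines
   rho(log(x/y)), which determines i (the sets rhoDelta are disjoint), then the
   ordered pair (x, y) (coset completeness), and finally l, since for n prime
   every nonzero cyclotomic coset modulo 2^n - 1 has exactly n elements. *)

Lemma uniq_map_inj [T1 T2 : eqType] [f : T1 -> T2] [s : seq T1] :
  uniq (map f s) -> {in s &, injective f}.
Proof.
elim: s => //= a s IH /andP[fa_notin uniq_fs] x y; rewrite !inE.
move=> /orP[/eqP->|xs] /orP[/eqP->|ys] fxy //.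
- by rewrite fxy map_f in fa_notin.
- by rewrite -fxy map_f in fa_notin.
- exact: IH.
Qed.

Lemma size_offdiag_pairs (T : finType) (A : {set T}) :
  size [seq p <- [seq (a, b) | a <- enum A, b <- enum A] | p.1 != p.2]
  = (#|A| * (#|A| - 1))%N.
Proof.
set L := [seq p <- _ | _].
have uniqL : uniq L.
  by rewrite filter_uniq // allpairs_uniq ?enum_uniq // => -[a b] [c d] _ _.
rewrite -(card_uniqP uniqL).
have -> : #|L| = #|setX A A :\: [set (a, a) | a in A]|.
  apply: eq_card => -[a b]; rewrite !inE mem_filter /=.
  apply/andP/andP => [[a_neq_b /allpairsP[[c d] /= [Ac Ad [ac bd]]]]|].
    subst a b; rewrite !mem_enum in Ac Ad; rewrite Ac Ad; split=> //.
    by apply/imsetP=> -[e _ [ce de]]; rewrite ce de eqxx in a_neq_b.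
  move=> [not_diag /andP[Aa Ab]]; split.
    by apply: contra not_diag => /eqP<-; apply: imset_f.
  by apply/allpairsP; exists (a, b); rewrite !mem_enum.
rewrite cardsD cardsX (setIidPr _).
  by rewrite card_imset ?mulnBr ?muln1 // => x y [].
by apply/subsetP => _ /imsetP[a Aa ->]; rewrite in_setX Aa.
Qed.

Lemma plane_ksubspace [F : finFieldType] [a : F] : 2%N \in [pchar F] ->
  a != 0 -> a != 1 -> is_ksubspace 2 (0 |: (1 |: (a |: [set 1 + a])) : {set F}).
Proof.
move=> char2 a_neq0 a_neq1; have xx0 := addrr_pchar2 char2.
have e1a : (0 == 1 + a) = false.
  by rewrite eq_sym addr_eq0 (oppr_pchar2 char2) eq_sym (negbTE a_neq1).
have e1a1 : (1 == 1 + a) = false.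
  by rewrite eq_sym -subr_eq0 addrAC subrr add0r (negbTE a_neq0).
have e1aa : (a == 1 + a) = false by rewrite eq_sym -subr_eq0 addrK oner_eq0.
rewrite /is_ksubspace /is_subspace -andbA.
apply/and3P; split; [by rewrite !inE eqxx | | ]; last first.
  rewrite !cardsU1 cards1 !inE e1a e1a1 e1aa (eq_sym 0 1) oner_eq0.
  by rewrite (eq_sym 0 a) (negbTE a_neq0) (eq_sym 1 a) (negbTE a_neq1).
apply/forallP=> x; apply/implyP; rewrite !inE => /or4P[]/eqP->;
apply/forallP=> y; apply/implyP; rewrite !inE => /or4P[]/eqP->.
all: rewrite ?(add0r, addr0, xx0, addrA, eqxx, orbT) //.
all: rewrite ?(addrC a 1) ?(addrAC 1 a 1) -?(addrA 1 a a).
all: by rewrite ?xx0 ?add0r ?addr0 ?eqxx ?orbT.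
Qed.

Lemma sum_card_unique [I T : finType] (S : I -> {set T}) [i0 t0] :
  t0 \in S i0 -> (forall i j t u, t \in S i -> u \in S j -> i = j /\ t = u) ->
  (\sum_i #|S i| = 1)%N.
Proof.
move=> St0 S_unique; rewrite (bigD1 i0) //= big1 ?addn0 => [|i i_neq_i0].
  apply/eqP/cards1P; exists t0; apply/setP=> t; rewrite inE.
  by apply/idP/eqP=> [St|->//]; case: (S_unique _ _ _ _ St St0).
apply/eqP; rewrite cards_eq0; apply/eqP/setP=> t; rewrite inE.
apply/negbTE/negP=> St; case: (S_unique _ _ _ _ St St0) => i_eq_i0.
by rewrite i_eq_i0 eqxx in i_neq_i0.
Qed.

Section CyclotomicCosets.
Variable n : nat.
Local Open Scope nat_scope.
Hypothesis n_gt0 : 0 < n.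
Local Notation m := (2 ^ n - 1).

Lemma exp2n_mod : 2 ^ n = 1 %[mod m].
Proof.
have e : 2 ^ n = m + 1 by rewrite subnK // expn_gt0.
by rewrite {1}e modnDl.
Qed.

Lemma mul_exp2_mod s a : s * 2 ^ a = s * 2 ^ (a %% n) %[mod m].
Proof.
rewrite {1}(divn_eq a n) expnD (mulnC _ n) expnM mulnCA.
by rewrite -modnMml -modnXm exp2n_mod modnXm exp1n modnMml mul1n.
Qed.

Lemma rho_modn [s t] : s = t %[mod m] -> rho n s = rho n t.
Proof.
move=> st; rewrite /rho st; apply: eq_bigr => i _.
by rewrite -modnMml st modnMml.
Qed.

Lemma rho_le_term s (i : 'I_n) : rho n s <= s * 2 ^ i %% m.
Proof.
by rewrite /rho -minEnat; exact: (bigmin_le _ i (fun j : 'I_n => s * 2 ^ j %% m)).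
Qed.

Lemma rho_attained s : exists i : 'I_n, rho n s = s * 2 ^ i %% m.
Proof.
apply: (big_ind (fun v => exists i : 'I_n, v = s * 2 ^ i %% m)) => [|u v|i _].
- by exists (Ordinal n_gt0); rewrite muln1.
- by move=> [i ->] [j ->]; rewrite /minn; case: ifP; eexists.
- by exists i.
Qed.

Lemma rho_le_mul_exp2 s c : rho n s <= rho n (s * 2 ^ c).
Proof.
have [i ->] := rho_attained (s * 2 ^ c).
rewrite -mulnA -expnD mul_exp2_mod.
exact: (rho_le_term s (Ordinal (ltn_pmod (c + i) n_gt0))).
Qed.

Lemma rho_mul_exp2 s c : rho n (s * 2 ^ c) = rho n s.
Proof.
apply/anti_leq; rewrite rho_le_mul_exp2 andbT.
have back : s * 2 ^ c * 2 ^ (c * (n - 1)) = s %[mod m].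
  rewrite -mulnA -expnD -mulnS subn1 prednK // mul_exp2_mod.
  by rewrite modnMl muln1.
by rewrite -(rho_modn back) rho_le_mul_exp2.
Qed.

Lemma mul_exp2_iter s c t : s * 2 ^ c = s %[mod m] -> s * 2 ^ (c * t) = s %[mod m].
Proof.
move=> sc; elim: t => [|t IH]; first by rewrite muln0 muln1.
by rewrite mulnS expnD mulnA -modnMml sc modnMml.
Qed.

Lemma mul_exp2_fixed s c : prime n -> 0 < c < n -> s * 2 ^ c = s %[mod m] -> s %% m = 0.
Proof.
move=> pn /andP[c_gt0 c_lt_n] sc.
have [a _] := Bezoutl c (prime_gt0 pn).
have /eqP-> : coprime n c by rewrite prime_coprime // gtnNdvd.
case/dvdnP=> q def_q.
have s2 : s * 2 = s %[mod m].
  have <- : s * 2 ^ (c * a) * 2 = s * 2 %[mod m].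
    by rewrite -modnMml mul_exp2_iter // modnMml.
  rewrite -mulnA -expnSr.
  have -> : (c * a).+1 = q * n by rewrite -def_q add1n mulnC.
  by rewrite mul_exp2_mod modnMl muln1.
apply/eqP; move/eqP: s2; rewrite eqn_mod_dvd ?leq_pmulr //.
by rewrite muln2 -addnn addnK.
Qed.

Lemma mul_exp2_inj [s l l'] : prime n -> s %% m != 0 -> l < n -> l' < n ->
  s * 2 ^ l = s * 2 ^ l' %[mod m] -> l = l'.
Proof.
move=> pn s_nz; wlog le_ll' : l l' / l <= l'.
  move=> W lt_l lt_l' e; have [le|/ltnW le] := leqP l l'; first exact: W.
  by apply/esym/W.
move=> lt_l lt_l' e; apply/eqP; rewrite eqn_leq le_ll' leqNgt /=.
apply: contra s_nz => lt_ll'; apply/eqP/(mul_exp2_fixed _ (l' - l) pn).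
  by rewrite subn_gt0 lt_ll' (leq_ltn_trans (leq_subr l l') lt_l').
have e' : s * 2 ^ (l + (n - l)) = s * 2 ^ (l' + (n - l)) %[mod m].
  by rewrite !expnD !mulnA -modnMml e modnMml.
rewrite (subnKC (ltnW lt_l)) (mul_exp2_mod _ n) modnn expn0 muln1 in e'.
rewrite e' [in RHS]mul_exp2_mod.
have -> : l' + (n - l) = l' - l + n by lia.
by rewrite modnDr (modn_small (leq_ltn_trans (leq_subr l l') lt_l')).
Qed.
End CyclotomicCosets.

Section ExponentsOfPrimitiveRoot.
Variables (n : nat) (F : finFieldType) (alpha : F).
Local Notation m := (2 ^ n - 1)%N.
Hypothesis n_gt1 : (1 < n)%N.
Hypothesis cardF : #|F| = (2 ^ n)%N.
Hypothesis prim : m.-primitive_root alpha.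

Let n_gt0 : (0 < n)%N := ltnW n_gt1.

Lemma m_gt1 : (1 < m)%N.
Proof. by rewrite ltn_subRL (leq_trans _ (leq_pexp2l _ n_gt1)). Qed.

Lemma char2 : 2%N \in [pchar F].
Proof. exact: card_finPcharP cardF _. Qed.

Lemma alpha_neq0 : alpha != 0.
Proof.
apply/eqP=> alpha0; have := prim_expr_order prim.
by rewrite alpha0 expr0n gtn_eqF ?(ltnW m_gt1) // => /eqP; rewrite eq_sym oner_eq0.
Qed.

Lemma dlogK z : z != 0 -> alpha ^+ dlog m alpha z = z.
Proof.
move=> z_neq0; have zm : z ^+ m = 1.
  apply: (mulfI z_neq0); rewrite mulr1 -exprS -[in RHS](expf_card z) cardF.
  by rewrite -addn1 subnK ?expn_gt0.
have [i ->] := prim_rootP prim zm.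
have has_i : has (fun j => alpha ^+ j == alpha ^+ i) (iota 0 m).
  by apply/hasP; exists (val i); rewrite ?mem_iota /=.
have := nth_find 0%N has_i; rewrite nth_iota ?add0n => [/eqP //|].
by move: has_i; rewrite has_find size_iota.
Qed.

Definition zexp (u : 'Z_m) : F := alpha ^+ u.

Lemma zexp_nat a : zexp a%:R = alpha ^+ a.
Proof.
by apply/eqP; rewrite /zexp val_Zp_nat ?m_gt1 // (eq_prim_root_expr prim) modn_mod.
Qed.

Lemma zexp_inj : injective zexp.
Proof.
have lt_m (u : 'Z_m) : (u < m)%N by rewrite -[ltnRHS]Zp_cast ?m_gt1.
move=> u v /eqP; rewrite /zexp (eq_prim_root_expr prim) !modn_small ?lt_m //.
by move/eqP/val_inj.
Qed.

Lemma zexp_neq0 u : zexp u != 0.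
Proof. by rewrite expf_neq0 // alpha_neq0. Qed.

Lemma zexpD u v : zexp (u + v) = zexp u * zexp v.
Proof.
have -> : u + v = (u + v)%N%:R :> 'Z_m by rewrite natrD !natr_Zp.
by rewrite zexp_nat exprD.
Qed.

Lemma zexpB u v : zexp (u - v) = zexp u / zexp v.
Proof. by rewrite -{2}(subrK v u) (zexpD (u - v)) mulfK ?zexp_neq0. Qed.

Lemma expr_pow2_inj l : injective (fun x : F => x ^+ (2 ^ l)).
Proof.
have sqr_inj : injective (fun x : F => x ^+ 2).
  by move=> x y; rewrite -!(pFrobenius_autE char2); apply: fmorph_inj.
elim: l => [|l IH] x y; first by rewrite !expr1.
by rewrite expnSr !exprM => /sqr_inj /IH.
Qed.

Definition log_pow2 (l : nat) (x : F) : 'Z_m := (dlog m alpha x * 2 ^ l)%N%:R.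

Lemma zexp_log_pow2 l x : x != 0 -> zexp (log_pow2 l x) = x ^+ (2 ^ l).
Proof. by move=> x_neq0; rewrite zexp_nat exprM dlogK. Qed.

Lemma dlog_expr_pow2_congr [z z' l l'] : z != 0 -> z' != 0 ->
  z ^+ (2 ^ l) = z' ^+ (2 ^ l') ->
  (dlog m alpha z * 2 ^ l = dlog m alpha z' * 2 ^ l' %[mod m])%N.
Proof.
by move=> z0 z'0 e; apply/eqP; rewrite -(eq_prim_root_expr prim) !exprM !dlogK // e.
Qed.

Lemma dlog_modn_neq0 [z] : z != 0 -> z != 1 -> (dlog m alpha z %% m != 0)%N.
Proof.
move=> z0; apply: contra => /eqP dz.
by rewrite -(dlogK _ z0) -(prim_expr_mod prim) dz expr0.
Qed.

Lemma zexp_log_pow2B l x y : x != 0 -> y != 0 ->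
  zexp (log_pow2 l x - log_pow2 l y) = (x / y) ^+ (2 ^ l).
Proof. by move=> x0 y0; rewrite zexpB !zexp_log_pow2 // expr_div_n. Qed.

Lemma log_pow2_inj l : {in [pred x | x != 0] &, injective (log_pow2 l)}.
Proof.
move=> x y x0 y0 /(congr1 zexp); rewrite !zexp_log_pow2 //.
exact: expr_pow2_inj.
Qed.

Section DevelopedBlocks.
Variables (k N : nat) (X : 'I_N -> {set F}).
Hypothesis n_prime : prime n.
Hypothesis k_ge2 : (2 <= k)%N.
Hypothesis X_subspace : forall i, is_ksubspace k (X i).
Hypothesis X_coset_complete : forall i, coset_complete n k alpha (X i).
Hypothesis X_disjoint : forall i j, i != j -> cc_disjoint n alpha (X i) (X j).
Hypothesis X_steiner : steiner_structure k
    (\bigcup_i \bigcup_(l < n) \bigcup_(j < m)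
        [set [set alpha ^+ j * x ^+ (2 ^ l) | x in X i]]).

Lemma nonzero_mem [i x] : x \in X i :\ 0 -> x != 0.
Proof. by case/setD1P. Qed.

Lemma card_nonzero i : #|X i :\ 0| = (2 ^ k - 1)%N.
Proof.
have /andP[/andP[X0 _] /eqP <-] := X_subspace i.
by rewrite (cardsD1 0 (X i)) X0 add1n subn1.
Qed.

Lemma rhoDelta_mem [i x y] : x \in X i :\ 0 -> y \in X i :\ 0 -> x != y ->
  rho n (dlog m alpha (x / y)) \in rhoDelta n alpha (X i).
Proof.
move=> Xx Xy x_neq_y; rewrite mem_undup; apply/mapP; exists (x, y) => //.
by rewrite mem_filter x_neq_y; apply/allpairsP; exists (x, y); rewrite !mem_enum.
Qed.

Lemma rhoDelta_inj [i x y x' y'] :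
  x \in X i :\ 0 -> y \in X i :\ 0 -> x != y ->
  x' \in X i :\ 0 -> y' \in X i :\ 0 -> x' != y' ->
  rho n (dlog m alpha (x / y)) = rho n (dlog m alpha (x' / y')) -> x = x' /\ y = y'.
Proof.
move=> Xx Xy x_neq_y Xx' Xy' x'_neq_y' rho_eq.
have := X_coset_complete i; rewrite /coset_complete /rhoDelta.
set L := [seq p <- _ | _] => size_undup.
have uniq_rhoL : uniq [seq rho n (dlog m alpha (p.1 / p.2)) | p <- L].
  apply/negPn; rewrite -ltn_size_undup size_undup size_map size_offdiag_pairs.
  by rewrite card_nonzero -subnDA ltnn.
have inL a b : a \in X i :\ 0 -> b \in X i :\ 0 -> a != b -> (a, b) \in L.
  move=> Xa Xb a_neq_b; rewrite mem_filter a_neq_b.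
  by apply/allpairsP; exists (a, b); rewrite !mem_enum.
have Lxy := inL _ _ Xx Xy x_neq_y; have Lx'y' := inL _ _ Xx' Xy' x'_neq_y'.
by case: (uniq_map_inj uniq_rhoL _ _ Lxy Lx'y' rho_eq) => -> ->.
Qed.

Definition block (p : 'I_N * 'I_n) : {set 'Z_m} :=
  [set log_pow2 p.2 x | x in X p.1 :\ 0].

Definition block_diffs (p : 'I_N * 'I_n) (g : 'Z_m) : {set 'Z_m * 'Z_m} :=
  [set q | [&& q.1 \in block p, q.2 \in block p, q.1 != q.2 & q.1 - q.2 == g]].

Lemma block_diffsP p g q : q \in block_diffs p g -> exists x y,
  [/\ x \in X p.1 :\ 0, y \in X p.1 :\ 0, x != y,
       q = (log_pow2 p.2 x, log_pow2 p.2 y) & (x / y) ^+ (2 ^ p.2) = zexp g].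
Proof.
case: q => q1 q2; rewrite inE /=.
case/and4P=> /imsetP[x Xx ->] /imsetP[y Xy ->] lg_neq /eqP <-.
have [x0 y0] := (nonzero_mem Xx, nonzero_mem Xy).
exists x, y; split=> //; last by rewrite zexp_log_pow2B.
by apply: contraNneq lg_neq => ->.
Qed.

Lemma block_diffs_unique g [p p' q q'] :
  q \in block_diffs p g -> q' \in block_diffs p' g -> p = p' /\ q = q'.
Proof.
case: p p' => [i l] [i' l'] /block_diffsP[x [y [Xx Xy x_neq_y -> exy]]].
case/block_diffsP=> x' [y' [Xx' Xy' x'_neq_y' -> ex'y']] /=.
have [x0 y0] := (nonzero_mem Xx, nonzero_mem Xy).
have [x'0 y'0] := (nonzero_mem Xx', nonzero_mem Xy').
have [xy0 x'y'0] : x / y != 0 /\ x' / y' != 0 by rewrite !mulf_neq0 ?invr_eq0.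
rewrite /= in exy ex'y'.
have d_congr := dlog_expr_pow2_congr xy0 x'y'0 (etrans exy (esym ex'y')).
have rho_eq : rho n (dlog m alpha (x / y)) = rho n (dlog m alpha (x' / y')).
  rewrite -(rho_mul_exp2 _ n_gt0 (dlog m alpha (x / y)) l).
  by rewrite -(rho_mul_exp2 _ n_gt0 (dlog m alpha (x' / y')) l') (rho_modn _ d_congr).
have i_eq : i = i'.
  apply/eqP; apply: contraT => i_neq.
  have /allP/(_ _ (rhoDelta_mem Xx Xy x_neq_y)) := X_disjoint _ _ i_neq.
  by rewrite rho_eq rhoDelta_mem.
subst i'; have [ex ey] := rhoDelta_inj Xx Xy x_neq_y Xx' Xy' x'_neq_y' rho_eq.
subst x' y'.
have xy_neq1 : x / y != 1 by apply: contra x_neq_y => /eqP/divr1_eq->.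
have l_eq := mul_exp2_inj _ n_gt0 n_prime (dlog_modn_neq0 xy0 xy_neq1)
  (ltn_ord l) (ltn_ord l') d_congr.
by rewrite (val_inj l_eq).
Qed.

Lemma steiner_cover (Y : {set F}) : is_ksubspace 2 Y ->
  exists i (l : 'I_n) (j : 'I_m), Y \subset [set alpha ^+ j * x ^+ (2 ^ l) | x in X i].
Proof.
move=> Y2; case: X_steiner => _ /(_ Y Y2) /eqP /cards1P[B SB].
have : B \in [set B] by rewrite set11.
rewrite -SB inE => /andP[/bigcupP[i _ /bigcupP[l _ /bigcupP[j _ /set1P ->]]] YB].
by exists i, l, j.
Qed.

Lemma block_diffs_exist g : g != 0 -> exists p q, q \in block_diffs p g.
Proof.
move=> g_neq0; set a := zexp g.
have a_neq1 : a != 1.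
  by apply: contra g_neq0 => /eqP a1; apply/eqP/zexp_inj; rewrite -/a a1 /zexp expr0.
have plane := plane_ksubspace char2 (zexp_neq0 g) a_neq1.
have [i [l [j /subsetP sub]]] := steiner_cover _ plane.
have /imsetP[x Xx one_eq] : 1 \in [set alpha ^+ j * x ^+ (2 ^ l) | x in X i].
  by apply: sub; rewrite !inE eqxx orbT.
have /imsetP[y Xy a_eq] : a \in [set alpha ^+ j * x ^+ (2 ^ l) | x in X i].
  by apply: sub; rewrite !inE eqxx !orbT.
have x0 : x != 0.
  move: (oner_neq0 F); rewrite one_eq mulf_eq0 (expf_eq0 x) expn_gt0.
  by rewrite negb_or => /andP[].
have y0 : y != 0.
  move: (zexp_neq0 g); rewrite -/a a_eq mulf_eq0 (expf_eq0 y) expn_gt0.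
  by rewrite negb_or => /andP[].
have y_neq_x : y != x by apply: contra a_neq1 => /eqP yx; rewrite a_eq yx -one_eq.
have ratio : (y / x) ^+ (2 ^ l) = a.
  have aj0 : alpha ^+ j != 0 by rewrite expf_neq0 // alpha_neq0.
  have x_inv : x ^+ (2 ^ l) = (alpha ^+ j)^-1.
    by apply: (mulfI aj0); rewrite -one_eq divff.
  by rewrite expr_div_n x_inv invrK mulrC -a_eq.
exists (i, l), (log_pow2 l y, log_pow2 l x); rewrite inE /=.
rewrite !imset_f ?inE ?x0 ?y0 //=; apply/andP; split.
  by apply: contra y_neq_x => /eqP/log_pow2_inj->.
by apply/eqP/zexp_inj; rewrite zexp_log_pow2B.
Qed.

Lemma card_block p : #|block p| = (2 ^ k - 1)%N.
Proof.
rewrite card_in_imset ?card_nonzero // => x y /nonzero_mem x0 /nonzero_mem y0.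
exact: log_pow2_inj.
Qed.

Lemma developed_blocks_difference_family :
  difference_family (2 ^ k - 1) 1 (map block (index_enum _)).
Proof.
split; [|split].
- rewrite map_inj_uniq ?index_enum_uniq // => p p' same_block.
  have : (1 < #|block p|)%N.
    by rewrite card_block ltn_subRL (leq_trans _ (leq_pexp2l _ k_ge2)).
  case/card_gt1P=> u [v [Bu Bv u_neq_v]].
  have Duv : (u, v) \in block_diffs p (u - v) by rewrite inE /= Bu Bv u_neq_v eqxx.
  have Duv' : (u, v) \in block_diffs p' (u - v) by rewrite /block_diffs -same_block.
  by case: (block_diffs_unique _ Duv Duv').
- by apply/allP=> _ /mapP[p _ ->]; rewrite card_block.
move=> g g_neq0; rewrite big_map.
have [p0 [q0 Dq0]] := block_diffs_exist _ g_neq0.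
rewrite (eq_bigr (fun p => #|block_diffs p g|)) //.
exact: (sum_card_unique (block_diffs^~ g) Dq0 (block_diffs_unique g)).
Qed.

End DevelopedBlocks.

End ExponentsOfPrimitiveRoot.

Theorem theorem4 (n k : nat) (F : finFieldType) (alpha : F)
  (X : 'I_((2 ^ n - 2) %/ ((2 ^ k - 1) * (2 ^ k - 2) * n)) -> {set F}) :
  prime n -> #|F| = (2 ^ n)%N -> (2 ^ n - 1).-primitive_root alpha -> (2 <= k)%N ->
  (forall i, is_ksubspace k (X i)) ->
  (forall i, coset_complete n k alpha (X i)) ->
  (forall i j, i != j -> cc_disjoint n alpha (X i) (X j)) ->
  steiner_structure k
    (\bigcup_i \bigcup_(l < n) \bigcup_(j < 2 ^ n - 1)
        [set [set alpha ^+ j * x ^+ (2 ^ l) | x in X i]]) ->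
  exists D : seq {set 'Z_(2 ^ n - 1)}, difference_family (2 ^ k - 1) 1 D.
Proof.
move=> n_prime cardF prim k_ge2 X_subspace X_cc X_disjoint X_steiner.
eexists; apply: developed_blocks_difference_family X_steiner => //.
exact: prime_gt1.
Qed.
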